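(* Let $m, k, g$ be positive integers with $m > k$, and let $A \in \mathcal A_k$. Then the numerical semigroups with multiplicity $m$, type $(A; k)$, and genus $g$ are exactly the sets of the form \[ \Lambda = \{0\} \cup (m + A) \cup \bigl(2m + ((A + A)\cap[0, k])\bigr) \cup B \cup [2m + k + 1, \infty) \] where $B$ is any subset of $[m+k+1, 2m+k-1] \setminus (2m + A + A)$ with exactly $2m + k - |A| - |(A + A)\cap[0, k]| - g$ elements. Furthermore, the number of such numerical semigroups equals \[ \binom{m - 1 - |(A + A)\cap[0, k]|}{g + |A|-m-k - 1}. \]
   Context: A numerical semigroup is a subset $\Lambda\subseteq\mathbb{N}_0$ closed under addition, containing $0$, with finite complement in $\mathbb{N}_0$. Its genus is $|\mathbb{N}_0\setminus\Lambda|$, its multiplicity $m$ is its smallest nonzero element and its Frobenius number $f$ is the largest element of $\mathbb{N}_0\setminus\Lambda$. For integers $a\le b$, $[a,b]=\{a,\dots,b\}$, and $[a,\infty)=\{a,a+1,\dots\}$. For $A\subseteq\mathbb{Z}$ and $b\in\mathbb{Z}$, $A+A=\{a_1+a_2:a_1,a_2\in A\}$ and $b+A=\{a+b:a\in A\}$. For a positive integer $k$, $\mathcal A_k = \{A \subseteq [0, k-1] : 0 \in A \text{ and } k \notin A + A\}$. A numerical semigroup $\Lambda$ with multiplicity $m$ and Frobenius number $f$ satisfying $2m<f<3m$ has type $(A;k)$, where $k<m$ is a positive integer and $A\in\mathcal A_k$, if $f=2m+k$ and $\Lambda\cap[m,m+k]=A+m$. The binomial coefficient $\binom{a}{b}$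 is taken to be $0$ unless $0\le b\le a$. *)

From mathcomp Require Import all_boot all_order all_algebra.
Set Implicit Arguments. Unset Strict Implicit. Unset Printing Implicit Defensive.
Import GRing.Theory Num.Theory.

Definition numerical_semigroup (L : pred nat) : Prop :=
  [/\ L 0, (forall a b, L a -> L b -> L (a + b))
    & exists N, forall n, N <= n -> L n].

Definition multiplicity (L : pred nat) (m : nat) : Prop :=
  [/\ 0 < m, L m & forall n, 0 < n < m -> ~~ L n].

Definition frobenius (L : pred nat) (f : nat) : Prop :=
  ~~ L f /\ forall n, f < n -> L n.

Definition genus (L : pred nat) (g : nat) : Prop :=
  exists N, (forall n, N <= n -> L n) /\ count (predC L) (iota 0 N) = g.

Definition sumset (A : pred nat) (n : nat) : bool :=
  [exists a : 'I_n.+1, A a && A (n - a)].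

Definition in_calA (k : nat) (A : pred nat) : Prop :=
  [/\ forall a, A a -> a < k, A 0 & ~~ sumset A k].

Definition cardA (k : nat) (A : pred nat) : nat := count A (iota 0 k).

Definition cardAA (k : nat) (A : pred nat) : nat := count (sumset A) (iota 0 k.+1).

Definition has_type (L : pred nat) (m : nat) (A : pred nat) (k : nat) : Prop :=
  [/\ 0 < k < m, in_calA k A, frobenius L (2 * m + k)
    & forall n, m <= n <= m + k -> L n = A (n - m)].

Definition binomz (a b : int) : nat :=
  if ((0 <= b) && (b <= a))%R then 'C(`|a|%N, `|b|%N) else 0.

From mathcomp Require Import all_boot all_order all_algebra.
From mathcomp Require Import zify.
From Stdlib Require Import FunctionalExtensionality.

Set Implicit Arguments.
Unset Strict Implicit.

(* A semigroup of type (A;k) and multiplicity m agrees with m + A on [m, m+k],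
   misses the Frobenius number 2m+k and contains everything beyond it.  Its
   nonzero elements lie in m + A or exceed m+k, so a sum of two of them either
   exceeds 2m+k or lies in 2m + (A+A) with both summands in m + A; as k is not
   in A+A, such sums never hit 2m+k.  Hence, besides the forced elements
   2m + ((A+A) \cap [0,k]), the elements of [m+k+1, 2m+k-1] may be chosen
   freely, the genus prescribes how many, and the semigroups correspond to the
   subsets of that size of these m - 1 - |(A+A) \cap [0,k]| free positions. *)

Lemma count_iota_shift (m N : nat) (P : pred nat) :
  count (fun n => (m <= n) && P (n - m)) (iota 0 (m + N)) = count P (iota 0 N).
Proof.
rewrite iotaD count_cat add0n.
rewrite (eq_in_count (a2 := pred0) (s := iota 0 m)) ?count_pred0; last first.
  by move=> x; rewrite mem_iota => /andP[_ ltxm] /=; lia.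
rewrite -[m in iota m _]addn0 iotaDl count_map add0n.
by apply: eq_count => x /=; rewrite leq_addr addKn.
Qed.

Lemma count_iota_widen (P : pred nat) (k N : nat) :
  (forall x, k <= x -> ~~ P x) -> k <= N -> count P (iota 0 N) = count P (iota 0 k).
Proof.
move=> Pk lekN; rewrite -(subnKC lekN) iotaD count_cat add0n.
rewrite (eq_in_count (a2 := pred0) (s := iota k (N - k))) ?count_pred0 ?addn0 //.
by move=> x; rewrite mem_iota => /andP[lekx _]; apply/negbTE/Pk.
Qed.

Lemma count_or_disjoint (T : eqType) (a b : pred T) (s : seq T) :
  (forall x, x \in s -> ~~ (a x && b x)) ->
  count (fun x => a x || b x) s = count a s + count b s.
Proof.
move=> ab_disj; rewrite -(count_predUI a b).
rewrite [count (predI a b) s](eq_in_count (a2 := pred0)) ?count_pred0 ?addn0 //.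
by move=> x /ab_disj /negbTE.
Qed.

Lemma count_and_split (T : Type) (a b : pred T) (s : seq T) :
  count (fun x => a x && ~~ b x) s + count (fun x => a x && b x) s = count a s.
Proof. by elim: s => //= x s <-; case: (a x); case: (b x); rewrite /= ?addnS. Qed.

Lemma card_set_nth (P : seq nat) (C : pred nat) :
  #|[set i : 'I_(size P) | C (nth 0 P i)]| = count C P.
Proof.
have -> : count C P = count C (map (nth 0 P) (iota 0 (size P))).
  by rewrite -/(mkseq _ _) mkseq_nth.
rewrite cardsE cardE /enum_mem size_filter.
by rewrite -val_enum_ord -map_comp count_map enumT.
Qed.

Lemma genus_count (L : pred nat) (N g : nat) : (forall n, N <= n -> L n) ->
  genus L g <-> count (predC L) (iota 0 N) = g.
Proof.
move=> LN; split=> [[N' [LN' <-]] | ]; last by exists N.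
rewrite -(@count_iota_widen _ N (maxn N N')) ?leq_maxl //; last by move=> x /LN /= ->.
by rewrite (@count_iota_widen _ N' (maxn N N')) ?leq_maxr // => x /LN' /= ->.
Qed.

Definition free_elt (m k : nat) (A : pred nat) (b : nat) : bool :=
  (m + k + 1 <= b <= 2 * m + k - 1) && ~~ ((2 * m <= b) && sumset A (b - 2 * m)).

Definition type_semigroup (m k : nat) (A B : pred nat) (n : nat) : bool :=
  [|| n == 0, (m <= n) && A (n - m),
      (2 * m <= n) && (n - 2 * m <= k) && sumset A (n - 2 * m), B n
    | 2 * m + k + 1 <= n].

Definition typed_semigroup (m k g : nat) (A L : pred nat) : Prop :=
  numerical_semigroup L /\ multiplicity L m /\ has_type L m A k /\ genus L g.

Lemma in_calA_lt (k : nat) (A : pred nat) (a : nat) : in_calA k A -> A a -> a < k.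
Proof. by case=> ltAk _ _; apply: ltAk. Qed.

Lemma sumsetP (A : pred nat) (n : nat) :
  reflect (exists2 a, a <= n & A a && A (n - a)) (sumset A n).
Proof.
apply: (iffP existsP) => [[a Aa] | [a lean Aa]]; first by exists a => //; rewrite -ltnS.
by exists (Ordinal (leq_ltn_trans lean (ltnSn n))).
Qed.

Section TypeSemigroup.

Variables (m k : nat) (A B : pred nat).
Hypotheses (m_gt0 : 0 < m) (k_gt0 : 0 < k) (ltkm : k < m) (A_typ : in_calA k A)
  (B_free : forall b, B b -> free_elt m k A b).

Local Notation L := (type_semigroup m k A B).

Let B_range b : B b -> m + k + 1 <= b <= 2 * m + k - 1.
Proof. by case/B_free/andP. Qed.

Let A_lt a : A a -> a < k.
Proof. exact: in_calA_lt. Qed.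

Lemma type_semigroup_small n : 0 < n < m -> L n = false.
Proof.
move=> n_range; rewrite /type_semigroup.
case Bn: (B n); first by move/B_range: Bn; lia.
have -> : (n == 0) = false by lia.
have -> : (m <= n) = false by lia.
have -> : (2 * m <= n) = false by lia.
by have -> : (2 * m + k + 1 <= n) = false by lia.
Qed.

Lemma type_semigroup_mid n : m <= n <= m + k -> L n = A (n - m).
Proof.
move=> n_range; rewrite /type_semigroup.
case Bn: (B n); first by move/B_range: Bn; lia.
have -> : (n == 0) = false by lia.
have -> : (2 * m <= n) = false by lia.
have -> : (2 * m + k + 1 <= n) = false by lia.
by rewrite (_ : m <= n) ?orbF //; lia.
Qed.

Lemma type_semigroup_high n : m + k + 1 <= n <= 2 * m + k - 1 ->
  L n = ((2 * m <= n) && sumset A (n - 2 * m)) || B n.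
Proof.
move=> n_range; rewrite /type_semigroup.
have -> : A (n - m) = false by apply/negbTE/negP => /A_lt; lia.
have -> : (n == 0) = false by lia.
have -> : (2 * m + k + 1 <= n) = false by lia.
by rewrite andbF orbF /=; case: (2 * m <= n) => //=; rewrite (_ : n - 2 * m <= k) //; lia.
Qed.

Lemma type_semigroup_frobenius : L (2 * m + k) = false.
Proof.
have [_ _ kNAA] := A_typ.
rewrite /type_semigroup addKn (negbTE kNAA) !andbF.
have -> : A (2 * m + k - m) = false by apply/negbTE/negP => /A_lt; lia.
case B2mk: (B _); first by move/B_range: B2mk; lia.
by apply/negbTE; lia.
Qed.

Lemma type_semigroup_large n : 2 * m + k + 1 <= n -> L n.
Proof. by move=> n_large; rewrite /type_semigroup n_large !orbT. Qed.

Lemma type_semigroup_cases n :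
  L n -> [\/ n = 0, exists2 a, n = m + a & A a | m + k + 1 <= n].
Proof.
case/or4P=> [/eqP -> | /andP[lemn An] | /andP[/andP[le2mn _] _] | /orP[/B_range | ]].
- by constructor 1.
- by constructor 2; exists (n - m); rewrite ?subnKC.
- by constructor 3; lia.
- by move=> n_range; constructor 3; lia.
- by move=> n_large; constructor 3; lia.
Qed.

Lemma type_semigroup_add a b : L a -> L b -> L (a + b).
Proof.
move=> La Lb.
case/type_semigroup_cases: (La) => [a0 | [x ax Ax] | a_large]; first by rewrite a0.
all: case/type_semigroup_cases: (Lb) => [b0 | [y b_y Ay] | b_large];
  first by rewrite b0 addn0.
all: try by apply: type_semigroup_large; lia.
subst a b.
case: (leqP (x + y) k) => lexyk; last by apply: type_semigroup_large; lia.
have xyAA : sumset A (x + y) by apply/sumsetP; exists x; rewrite ?leq_addr ?addKn ?Ax.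
rewrite /type_semigroup (_ : m + x + (m + y) - 2 * m = x + y); last by lia.
by rewrite lexyk xyAA (_ : 2 * m <= _) ?orbT //; lia.
Qed.

Lemma count_type_semigroup : count L (iota 0 (2 * m + k + 1)) =
  1 + cardA k A + cardAA k A + count B (iota 0 (2 * m + k)).
Proof.
rewrite (eq_in_count (a2 := fun n => [|| n == 0, (m <= n) && A (n - m),
      (2 * m <= n) && (n - 2 * m <= k) && sumset A (n - 2 * m) | B n])); last first.
  move=> x; rewrite mem_iota /type_semigroup => /andP[_ x_small].
  by rewrite (_ : 2 * m + k + 1 <= x = false) ?orbF //; lia.
rewrite count_or_disjoint; last first.
  move=> x _; apply/negP => /andP[/eqP -> x0].
  by case/or3P: x0=> [/andP[] | /andP[/andP[]] | /B_range]; lia.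
rewrite count_or_disjoint; last first.
  move=> x _; apply/negP => /andP[/andP[_ /A_lt lt_xm_k]].
  by case/orP=> [/andP[/andP[]] | /B_range]; lia.
rewrite count_or_disjoint; last first.
  move=> x _; apply/negP => /andP[/andP[/andP[le2mx _] xAA] /B_free/andP[_]].
  by rewrite le2mx xAA.
rewrite -[in RHS]addnA -[in RHS]addnA; congr (_ + (_ + (_ + _))).
- rewrite addn1 /= (eq_in_count (a2 := pred0)) ?count_pred0 //.
  by move=> x; rewrite mem_iota => /andP[x_pos _] /=; lia.
- rewrite (_ : 2 * m + k + 1 = m + (m + k + 1)) ?count_iota_shift; last by lia.
  rewrite (@count_iota_widen A k) //; last by lia.
  by move=> x lekx; apply/negP => /A_lt; lia.
- rewrite (_ : 2 * m + k + 1 = 2 * m + k.+1); last by lia.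
  rewrite (eq_count (a2 := fun n => (2 * m <= n) &&
    ((fun y => (y <= k) && sumset A y) (n - 2 * m)))); last by move=> x; rewrite /= andbA.
  rewrite (count_iota_shift (2 * m) k.+1 (fun y => (y <= k) && sumset A y)) /cardAA.
  apply: eq_in_count => y.
  by rewrite mem_iota add0n ltnS => /andP[_ ->].
- rewrite (@count_iota_widen B (2 * m + k)) //; last by lia.
  by move=> x lex; apply/negP => /B_range; lia.
Qed.

Lemma type_semigroup_typed (g : nat) :
  (count B (iota 0 (2 * m + k)) : int)
    = ((2 * m + k)%:Z - (cardA k A)%:Z - (cardAA k A)%:Z - g%:Z)%R ->
  typed_semigroup m k g A L.
Proof.
move=> card_B; have [_ A0 _] := A_typ.
split; [|split; [|split]].
- split; [by rewrite /type_semigroup eqxx | exact: type_semigroup_add | ].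
  by exists (2 * m + k + 1); apply: type_semigroup_large.
- split=> //; last by move=> n /type_semigroup_small ->.
  by rewrite type_semigroup_mid ?subnn //; lia.
- split; [lia | exact: A_typ | | exact: type_semigroup_mid].
  split=> [|n lt_2mk_n]; first by rewrite type_semigroup_frobenius.
  by apply: type_semigroup_large; lia.
- rewrite (@genus_count _ (2 * m + k + 1)); last exact: type_semigroup_large.
  have := count_predC L (iota 0 (2 * m + k + 1)).
  by rewrite size_iota count_type_semigroup; lia.
Qed.

Lemma type_semigroup_free n : B n = free_elt m k A n && L n.
Proof.
case free_n: (free_elt m k A n) => /=; last by apply/negbTE/negP => /B_free; rewrite free_n.
by case/andP: free_n => n_range /negbTE nAA; rewrite type_semigroup_high // nAA.
Qed.

End TypeSemigroup.

Section Characterization.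

Variables (m k g : nat) (A L : pred nat).
Hypotheses (m_gt0 : 0 < m) (k_gt0 : 0 < k) (ltkm : k < m) (A_typ : in_calA k A).
Hypothesis L_typ : typed_semigroup m k g A L.

Definition free_part : pred nat := fun n => free_elt m k A n && L n.

Lemma free_part_free b : free_part b -> free_elt m k A b.
Proof. by case/andP. Qed.

(* an element of 2m + (A+A) below the Frobenius number is a sum of two
   elements of m + A *)
Lemma typed_semigroupE n : L n = type_semigroup m k A free_part n.
Proof.
have [[L0 L_add _] [[_ _ L_small] [[_ _ [L_frob L_large] L_mid] _]]] := L_typ.
have mid := type_semigroup_mid m_gt0 k_gt0 ltkm free_part_free.
case: (posnP n) => [-> | n_gt0]; first by rewrite L0 /type_semigroup eqxx.
case: (ltnP n m) => ltnm.
  rewrite (type_semigroup_small m_gt0 k_gt0 ltkm free_part_free); last by rewrite n_gt0.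
  by apply/negbTE/L_small; rewrite n_gt0.
case: (leqP n (m + k)) => le_n_mk; first by rewrite mid ?L_mid ?ltnm.
case: (ltngtP n (2 * m + k)) => [lt_n_2mk | n_large | ->].
- rewrite (type_semigroup_high free_part m_gt0 k_gt0 ltkm A_typ); last by lia.
  rewrite /free_part /free_elt (_ : m + k + 1 <= n <= _); last by lia.
  case AA: ((2 * m <= n) && _) => //=.
  case/andP: AA => le2mn /sumsetP [a le_a /andP[Aa Ab]].
  have ltak := in_calA_lt A_typ Aa; have ltbk := in_calA_lt A_typ Ab.
  rewrite (_ : n = (m + a) + (m + (n - 2 * m - a))); last by lia.
  by apply: L_add; rewrite L_mid ?addKn //; lia.
- by rewrite L_large ?type_semigroup_large //; lia.
- rewrite (type_semigroup_frobenius m_gt0 k_gt0 ltkm A_typ free_part_free).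
  exact/negbTE.
Qed.

Lemma count_free_part :
  (count free_part (iota 0 (2 * m + k)) : int)
    = ((2 * m + k)%:Z - (cardA k A)%:Z - (cardAA k A)%:Z - g%:Z)%R.
Proof.
have [_ [_ [[_ _ [_ L_large] _] L_genus]]] := L_typ.
move: L_genus; rewrite (@genus_count L (2 * m + k + 1)) => [L_genus|]; last first.
  by move=> n n_large; apply: L_large; lia.
have := count_predC L (iota 0 (2 * m + k + 1)).
rewrite L_genus size_iota (eq_count typed_semigroupE).
by rewrite (count_type_semigroup m_gt0 k_gt0 ltkm A_typ free_part_free); lia.
Qed.

End Characterization.

Lemma typed_semigroupP (m k g : nat) (A L : pred nat) :
  0 < m -> 0 < k -> k < m -> in_calA k A ->
  typed_semigroup m k g A L <->
  exists B : pred nat,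
    [/\ (forall b, B b -> free_elt m k A b),
        (count B (iota 0 (2 * m + k)) : int)
          = ((2 * m + k)%:Z - (cardA k A)%:Z - (cardAA k A)%:Z - g%:Z)%R
      & forall n, L n = type_semigroup m k A B n].
Proof.
move=> m_gt0 k_gt0 ltkm A_typ; split=> [L_typ | [B [B_free card_B LE]]].
  exists (free_part m k A L); split.
  - exact: @free_part_free.
  - exact: count_free_part.
  - exact: (typed_semigroupE m_gt0 k_gt0 ltkm A_typ L_typ).
rewrite (functional_extensionality _ _ LE).
exact: type_semigroup_typed.
Qed.

Lemma cardAAE (k : nat) (A : pred nat) :
  in_calA k A -> cardAA k A = count (sumset A) (iota 0 k).
Proof.
case=> _ _ kNAA; rewrite /cardAA -addn1 iotaD count_cat /= (negbTE kNAA).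
by rewrite !addn0.
Qed.

Lemma cardAA_le (k : nat) (A : pred nat) : in_calA k A -> cardAA k A <= k.
Proof. by move/cardAAE ->; rewrite -{2}(size_iota 0 k) count_size. Qed.

Definition free_elts (m k : nat) (A : pred nat) : seq nat :=
  filter (free_elt m k A) (iota 0 (2 * m + k)).

Lemma size_free_elts (m k : nat) (A : pred nat) : k < m -> in_calA k A ->
  size (free_elts m k A) = m - 1 - cardAA k A.
Proof.
move=> ltkm A_typ; rewrite size_filter.
set R := fun b => m + k + 1 <= b <= 2 * m + k - 1.
set H := fun b => (2 * m <= b) && sumset A (b - 2 * m).
have count_R : count R (iota 0 (2 * m + k)) = m - 1.
  rewrite (_ : 2 * m + k = m + k + 1 + (m - 1)); last by lia.
  rewrite -[in RHS](size_iota 0 (m - 1)) -count_predT -[in RHS](count_iota_shift (m + k + 1)).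
  by apply: eq_in_count => x; rewrite mem_iota /R /= => ltx; lia.
have count_RH : count (fun b => R b && H b) (iota 0 (2 * m + k)) = cardAA k A.
  rewrite (cardAAE A_typ) -[in RHS](count_iota_shift (2 * m)).
  apply: eq_in_count => x; rewrite mem_iota /R /H /= => ltx.
  case: (leqP (2 * m) x) => le2mx; rewrite /= ?andbF //.
  by rewrite (_ : m + k + 1 <= x <= _) //; lia.
by rewrite -count_R -count_RH -(count_and_split R H) addnK.
Qed.

Lemma mem_free_elts (m k : nat) (A : pred nat) (n : nat) : 0 < m ->
  (n \in free_elts m k A) = free_elt m k A n.
Proof.
move=> m_gt0; rewrite mem_filter mem_iota.
by apply: andb_idr => /andP[/andP[_ len] _]; lia.
Qed.

Lemma count_free_elts (m k : nat) (A B : pred nat) :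
  (forall b, B b -> free_elt m k A b) ->
  count B (iota 0 (2 * m + k)) = count B (free_elts m k A).
Proof.
move=> B_free; rewrite count_filter; apply: eq_count => x /=.
by case Bx: (B x); rewrite //= B_free.
Qed.

Lemma binomz_sub (p r : nat) : binomz p%:Z (p%:Z - r%:Z)%R = 'C(p, r).
Proof.
rewrite /binomz; case: (leqP r p) => [lerp | ltpr].
  by rewrite ifT ?subzn ?absz_nat ?bin_sub //; apply/andP; split; lia.
by rewrite ifF ?bin_small //; apply/negbTE; apply/negP => /andP[]; lia.
Qed.

Definition indexed_pred (P : seq nat) (S : {set 'I_(size P)}) : pred nat :=
  fun n => [exists i : 'I_(size P), (i \in S) && (nth 0 P i == n)].

Lemma indexed_pred_nth (P : seq nat) (S : {set 'I_(size P)}) (j : 'I_(size P)) :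
  uniq P -> indexed_pred S (nth 0 P j) = (j \in S).
Proof.
move=> P_uniq; apply/existsP/idP => [[i /andP[iS]] | jS]; last by exists j; rewrite jS eqxx.
by rewrite nth_uniq // => /eqP/val_inj <-.
Qed.

Lemma indexed_pred_mem (P : seq nat) (S : {set 'I_(size P)}) (n : nat) :
  indexed_pred S n -> n \in P.
Proof. by case/existsP=> i /andP[_ /eqP <-]; apply: mem_nth. Qed.

Lemma count_indexed_pred (P : seq nat) (S : {set 'I_(size P)}) :
  uniq P -> count (indexed_pred S) P = #|S|.
Proof.
move=> P_uniq; rewrite -card_set_nth.
by apply: eq_card => j; rewrite inE indexed_pred_nth.
Qed.

Lemma indexed_pred_preimage (P : seq nat) (B : pred nat) (n : nat) :
  (forall b, B b -> b \in P) -> indexed_pred [set i : 'I_(size P) | B (nth 0 P i)] n = B n.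
Proof.
move=> B_P; apply/existsP/idP => [[i] | Bn]; first by rewrite inE => /andP[Bi /eqP <-].
have lt_n_P : index n P < size P by rewrite index_mem B_P.
by exists (Ordinal lt_n_P); rewrite inE /= nth_index ?B_P ?Bn ?eqxx.
Qed.

Definition type_semigroups (m k : nat) (A : pred nat) (r : nat) : seq (pred nat) :=
  [seq type_semigroup m k A (indexed_pred X)
    | X <- enum [set X : {set 'I_(size (free_elts m k A))} | #|X| == r]].

Lemma size_type_semigroups (m k : nat) (A : pred nat) (r : nat) :
  size (type_semigroups m k A r) = 'C(size (free_elts m k A), r).
Proof. by rewrite size_map -cardE card_draws card_ord. Qed.

Section Enumeration.

Variables (m k g : nat) (A : pred nat).
Hypotheses (m_gt0 : 0 < m) (k_gt0 : 0 < k) (ltkm : k < m) (A_typ : in_calA k A).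

Local Notation P := (free_elts m k A).
Local Notation r := (2 * m + k - (cardA k A + cardAA k A + g)).
Local Notation Ls := (type_semigroups m k A r).
Local Notation Sets := (enum [set X : {set 'I_(size P)} | #|X| == r]).

Let P_uniq : uniq P.
Proof. by rewrite filter_uniq ?iota_uniq. Qed.

Let indexed_free (S : {set 'I_(size P)}) b : indexed_pred S b -> free_elt m k A b.
Proof. by move/indexed_pred_mem; rewrite mem_free_elts. Qed.

Lemma nth_type_semigroups i :
  i < size Ls -> nth xpred0 Ls i = type_semigroup m k A (indexed_pred (nth set0 Sets i)).
Proof. by rewrite size_map => lt_i; rewrite (nth_map set0). Qed.

Lemma nth_type_semigroups_inj i j : i < size Ls -> j < size Ls ->
  (forall n, nth xpred0 Ls i n = nth xpred0 Ls j n) -> i = j.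
Proof.
move=> lt_i lt_j; rewrite !nth_type_semigroups // => eq_ij.
rewrite size_map in lt_i lt_j.
have eq_S : nth set0 Sets i = nth set0 Sets j.
  apply/setP => t; rewrite -!indexed_pred_nth //.
  by rewrite !(type_semigroup_free m_gt0 k_gt0 ltkm A_typ (@indexed_free _)) eq_ij.
by apply/eqP; rewrite -(nth_uniq set0 lt_i lt_j (enum_uniq _)) eq_S.
Qed.

Lemma nth_type_semigroups_typed i : cardA k A + cardAA k A + g <= 2 * m + k ->
  i < size Ls -> typed_semigroup m k g A (nth xpred0 Ls i).
Proof.
move=> le_g lt_i; rewrite nth_type_semigroups //.
have : nth set0 Sets i \in Sets by apply: mem_nth; rewrite size_map in lt_i.
rewrite mem_enum inE => /eqP card_S.
apply: (type_semigroup_typed m_gt0 k_gt0 ltkm A_typ (@indexed_free _)).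
by rewrite (count_free_elts (@indexed_free _)) count_indexed_pred // card_S; lia.
Qed.

Lemma type_semigroups_complete (L : pred nat) : typed_semigroup m k g A L ->
  exists2 i, i < size Ls & forall n, L n = nth xpred0 Ls i n.
Proof.
case/(typed_semigroupP g L m_gt0 k_gt0 ltkm A_typ) => B [B_free card_B LE].
have B_P b : B b -> b \in P by move/B_free; rewrite mem_free_elts.
set S := [set t : 'I_(size P) | B (nth 0 P t)].
have card_S : #|S| = r by rewrite card_set_nth -count_free_elts //; lia.
have S_in : S \in Sets by rewrite mem_enum inE card_S.
exists (index S Sets); first by rewrite size_map index_mem.
move=> n; rewrite nth_type_semigroups ?size_map ?index_mem // nth_index // LE.
by rewrite /type_semigroup indexed_pred_preimage.
Qed.

End Enumeration.

Theorem corollary3p4 (m k g : nat) (A : pred nat) :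
  0 < m -> 0 < k -> 0 < g -> k < m -> in_calA k A ->
  (forall L : pred nat,
     (numerical_semigroup L /\ multiplicity L m /\ has_type L m A k /\ genus L g)
     <->
     exists B : pred nat,
       [/\ (forall b, B b ->
              (m + k + 1 <= b <= 2 * m + k - 1) &&
              ~~ ((2 * m <= b) && sumset A (b - 2 * m))),
           (count B (iota 0 (2 * m + k)) : int)
             = ((2 * m + k)%:Z - (cardA k A)%:Z - (cardAA k A)%:Z - g%:Z)%R
         & forall n, L n =
             [|| n == 0,
                 (m <= n) && A (n - m),
                 (2 * m <= n) && (n - 2 * m <= k) && sumset A (n - 2 * m),
                 B n
               | 2 * m + k + 1 <= n]])
  /\
  (exists Ls : seq (pred nat),
     [/\ size Ls = binomz ((m%:Z - 1 - (cardAA k A)%:Z)%R)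
                          ((g%:Z + (cardA k A)%:Z - m%:Z - k%:Z - 1)%R),
         (forall i j, i < size Ls -> j < size Ls ->
            (forall n, nth (xpred0 : pred nat) Ls i n = nth (xpred0 : pred nat) Ls j n) -> i = j),
         (forall i, i < size Ls ->
            let L := nth (xpred0 : pred nat) Ls i in
            numerical_semigroup L /\ multiplicity L m /\ has_type L m A k /\ genus L g)
       & (forall L : pred nat,
            numerical_semigroup L /\ multiplicity L m /\ has_type L m A k /\ genus L g ->
            exists2 i, i < size Ls & forall n, L n = nth (xpred0 : pred nat) Ls i n)]).
Proof.
move=> m_gt0 k_gt0 _ ltkm A_typ.
split=> [L | ]; first exact: typed_semigroupP.
have size_P := size_free_elts ltkm A_typ; have le_AA := cardAA_le A_typ.
case: (leqP (cardA k A + cardAA k A + g) (2 * m + k)) => [le_g | gt_g]; last first.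
  exists [::]; split=> //; last first.
    by move=> L /(typed_semigroupP g L m_gt0 k_gt0 ltkm A_typ) [B [_ card_B _]]; lia.
  by rewrite /binomz ifF //; apply/negbTE/negP => /andP[]; lia.
exists (type_semigroups m k A (2 * m + k - (cardA k A + cardAA k A + g))); split.
- by rewrite size_type_semigroups -binomz_sub size_P; congr binomz; lia.
- exact: nth_type_semigroups_inj.
- by move=> i; apply: nth_type_semigroups_typed.
- exact: type_semigroups_complete.
Qed.
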